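(* For every integer $p\ge 2$, the loop $C_p$ is topolinear, i.e., its graph $\{(u,v,w)\in Q_{2p}^3: w=u\ast v\}$ is a topolinear set.
   Context: Let $Q_{2p}=\{x_\zeta : x\in\mathbb{Z}_p,\ \zeta\in\{0,1\}\}$. The loop $C_p$ is the operation on $Q_{2p}$ given by $x_\zeta\ast y_\xi=((-1)^\xi x+y+\zeta\xi)_{\zeta\oplus\xi}$, with subscripts modulo $2$ and the rest modulo $p$. An isotopism of $Q_{2p}^3$ is a map $(u,v,w)\mapsto(\tau_1u,\tau_2v,\tau_3w)$ with $\tau_i$ permutations of $Q_{2p}$; a set $A$ is topolinear if the group of isotopisms mapping $A$ onto $A$ contains a subgroup of cardinality $|A|$ acting transitively on $A$. *)

From HB Require Import structures.
From mathcomp Require Import all_boot all_order all_algebra all_fingroup all_solvable.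
Set Implicit Arguments. Unset Strict Implicit. Unset Printing Implicit Defensive.
Import GRing.Theory.
Local Open Scope ring_scope.

(* Q_{2p} = { x_zeta : x in Z_p, zeta in {0,1} }, encoded as pairs (x, zeta). *)
Definition Q2 (p : nat) : finType := ('Z_p * bool)%type.

Definition Cp (p : nat) (a b : Q2 p) : Q2 p :=
  let: (x, z) := a in let: (y, xi) := b in
  ((if xi then - x else x) + y + (z && xi)%:R, addb z xi).

Definition isotopism (T : finType) : finGroupType :=
  ({perm T} * {perm T} * {perm T})%type.

Definition iso_act (T : finType) (g : isotopism T) (t : T * T * T) : T * T * T :=
  (g.1.1 t.1.1, g.1.2 t.1.2, g.2 t.2).

Definition iso_stab (T : finType) (A : {set T * T * T}) : {set isotopism T} :=
  [set g : isotopism T | iso_act g @: A == A].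

Definition topolinear (T : finType) (A : {set T * T * T}) : Prop :=
  exists H : {group isotopism T},
    [/\ H \subset iso_stab A, #|H| = #|A| &
        forall a b, a \in A -> b \in A -> exists2 h, h \in H & iso_act h a = b].

Definition op_graph (T : finType) (op : T -> T -> T) : {set T * T * T} :=
  [set t : T * T * T | t.2 == op t.1.1 t.1.2].

From mathcomp Require Import all_boot all_order all_algebra all_fingroup all_solvable.
From mathcomp Require Import ring.
Set Implicit Arguments. Unset Strict Implicit. Unset Printing Implicit Defensive.
Import GRing.Theory.
Local Open Scope ring_scope.

(* The graph A of C_p is topolinear because it carries a REGULAR group of
   isotopisms: a group H of isotopisms preserving A that moves the base point
   (1,1,1), 1 = 0_0 being the identity of C_p, onto every point of A and fixes
   it only by the identity element.  Then h |-> h(1,1,1) is a bijection H -> A,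
   so |H| = |A|, and H is transitive on A.  For C_p we take for H the autotopisms whose
   first component is a "signed translation" x_z |-> (+-x + (-1)^z a)_{z+al};
   explicit affine autotopisms [phi] give transitivity, and a short
   computation shows that such an automorphism is trivial, giving freeness. *)

Section IsotopismAction.
Variable T : finType.

Lemma iso_act_inj (g : isotopism T) : injective (iso_act g).
Proof.
move=> [[u v] w] [[u' v'] w']; rewrite /iso_act /= => [[]].
by move/perm_inj => -> /perm_inj -> /perm_inj ->.
Qed.

Lemma iso_actM (g h : isotopism T) t : iso_act (g * h)%g t = iso_act h (iso_act g t).
Proof. by case: g h t => [[g1 g2] g3] [[h1 h2] h3] [[u v] w]; rewrite /iso_act /= !permM. Qed.

Lemma iso_actK (g : isotopism T) t : iso_act g^-1%g (iso_act g t) = t.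
Proof. by case: g t => [[g1 g2] g3] [[u v] w]; rewrite /iso_act /= !permK. Qed.

Section RegularAction.
Variables (A : {set T * T * T}) (H : {group isotopism T}) (a0 : T * T * T).
Hypotheses (sHA : H \subset iso_stab A) (Aa0 : a0 \in A).
Hypothesis orbit_a0 : forall t, t \in A -> exists2 h, h \in H & iso_act h a0 = t.
Hypothesis free_a0 : forall h, h \in H -> iso_act h a0 = a0 -> h = 1%g.

Lemma regular_topolinear : topolinear A.
Proof.
pose f h := iso_act h a0.
have f_inj : {in H &, injective f}.
  move=> g h Hg Hh fgh; have hg1 : (h * g^-1)%g = 1%g.
    by apply: free_a0; rewrite ?groupM ?groupV // iso_actM -[iso_act h a0]fgh iso_actK.
  by rewrite -(mulgKV g h) hg1 mul1g.
have imH : f @: H = A.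
  apply/setP => t; apply/imsetP/idP => [[h Hh ->] | /orbit_a0[h Hh <-]]; last by exists h.
  have /eqP <- : iso_act h @: A == A by move/subsetP: sHA => /(_ h Hh); rewrite inE.
  exact: imset_f.
exists H; split=> //; first by rewrite -imH card_in_imset.
move=> a b /orbit_a0[g Hg <-] /orbit_a0[h Hh <-].
by exists (g^-1 * h)%g; rewrite ?groupM ?groupV // iso_actM iso_actK.
Qed.

End RegularAction.
End IsotopismAction.

Section Autotopisms.
Variables (T : finType) (op : T -> T -> T).

Definition autotopisms : {set isotopism T} :=
  [set g : isotopism T | [forall u, forall v, g.2 (op u v) == op (g.1.1 u) (g.1.2 v)]].

Lemma autotopismP (g : isotopism T) :
  reflect (forall u v, g.2 (op u v) = op (g.1.1 u) (g.1.2 v)) (g \in autotopisms).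
Proof.
rewrite inE; apply: (iffP forallP) => [gop u v | gop u].
  by apply/eqP; move/forallP: (gop u).
by apply/forallP => v; rewrite gop.
Qed.

Lemma autotopisms_group_set : group_set autotopisms.
Proof.
apply/group_setP; split; first by apply/autotopismP => u v; rewrite /= !perm1.
move=> [[g1 g2] g3] [[h1 h2] h3] /autotopismP /= g_op /autotopismP /= h_op.
by apply/autotopismP => u v /=; rewrite !permM g_op h_op.
Qed.

Canonical autotopisms_group := Group autotopisms_group_set.

Lemma autotopisms_stab : autotopisms \subset iso_stab (op_graph op).
Proof.
apply/subsetP => g /autotopismP g_op; rewrite inE eqEcard card_imset; last exact: iso_act_inj.
rewrite leqnn andbT; apply/subsetP => _ /imsetP[[[u v] w] + ->].
by rewrite !inE /= => /eqP ->; rewrite g_op.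
Qed.

Lemma autotopism_unit_fixed (e : T) (g : isotopism T) :
  left_id e op -> right_id e op -> g \in autotopisms ->
  g.1.1 e = e -> g.1.2 e = e -> g.2 =1 g.1.1 /\ g.2 =1 g.1.2.
Proof.
move=> op1x opx1 /autotopismP g_op g1e g2e; split=> u.
  by rewrite -[u in LHS]opx1 g_op g2e opx1.
by rewrite -[u in LHS]op1x g_op g1e op1x.
Qed.

End Autotopisms.

Definition first_in (T : finType) (G : {group {perm T}}) : {set isotopism T} :=
  [set g : isotopism T | g.1.1 \in G].

Lemma first_in_group_set (T : finType) (G : {group {perm T}}) : group_set (first_in G).
Proof.
apply/group_setP; split; first by rewrite inE group1.
by move=> g h; rewrite !inE; apply: groupM.
Qed.

Canonical first_in_group (T : finType) (G : {group {perm T}}) :=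
  Group (first_in_group_set G).

Section LoopCp.
Variable p : nat.
Local Notation Q := (Q2 p).

Definition affine (e : bool) (k : bool -> 'Z_p) (f : bool) (q : Q) : Q :=
  ((-1) ^+ e * q.1 + k q.2, q.2 (+) f).

Lemma affine_inj e k f : injective (affine e k f).
Proof.
move=> [x z] [y w] E; have Ezw : z = w := addIb (congr1 snd E); subst w.
congr (_, _); move/addIr/(congr1 ( *%R ((-1) ^+ e))): (congr1 fst E).
by rewrite !signrMK.
Qed.

Definition affp e k f : {perm Q} := perm (@affine_inj e k f).

Lemma affpE e k f q : affp e k f q = affine e k f q.
Proof. by rewrite permE. Qed.

(* Affine permutations are closed under composition (in the permutation
   group product, the left factor acts first). *)
Lemma affpM e k f e' k' f' :
  (affp e k f * affp e' k' f')%g =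
  affp (e (+) e') (fun z => (-1) ^+ e' * k z + k' (z (+) f)) (f (+) f').
Proof.
apply/permP => [[x z]]; rewrite permM !affpE /affine /= signr_addb addbA.
by congr (_, _); ring.
Qed.

Definition strans e a al : {perm Q} := affp e (fun z => (-1) ^+ z * a) al.

Definition strans_set : {set {perm Q}} :=
  [set s | [exists e, exists a, exists al, s == strans e a al]].

Lemma strans_setP (s : {perm Q}) : reflect (exists e a al, s = strans e a al) (s \in strans_set).
Proof.
rewrite inE; apply: (iffP existsP) => [[e /existsP[a /existsP[al /eqP ->]]] | [e [a [al ->]]]].
  by exists e, a, al.
by exists e; apply/existsP; exists a; apply/existsP; exists al.
Qed.

Lemma strans_group_set : group_set strans_set.
Proof.
apply/group_setP; split.
  apply/strans_setP; exists false, 0, false; apply/permP => [[x z]].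
  by rewrite perm1 affpE /affine /= mul1r mulr0 addr0 addbF.
move=> _ _ /strans_setP[e [a [al ->]]] /strans_setP[e' [a' [al' ->]]].
apply/strans_setP; exists (e (+) e'), ((-1) ^+ e' * a + (-1) ^+ al * a'), (al (+) al').
rewrite /strans affpM; apply/permP => [[x z]]; rewrite !affpE /affine /= !signr_addb.
by congr (_, _); ring.
Qed.

Canonical strans_group := Group strans_group_set.

Definition regular_group : {group isotopism Q} :=
  (autotopisms_group (@Cp p) :&: first_in_group strans_group)%G.

Definition unit_Cp : Q := (0, false).

Lemma Cp_unitl : left_id unit_Cp (@Cp p).
Proof. by case=> y w; rewrite /Cp /=; case: w; rewrite ?oppr0 !add0r addr0. Qed.

Lemma Cp_unitr : right_id unit_Cp (@Cp p).
Proof. by case=> x z; rewrite /Cp /= andbF addbF !addr0. Qed.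

Definition base : Q * Q * Q := (unit_Cp, unit_Cp, unit_Cp).

Lemma base_in_graph : base \in op_graph (@Cp p).
Proof. by rewrite inE Cp_unitr. Qed.

(* An affine autotopism of C_p sending the base point to (x_z, y_w, x_z * y_w);
   its first component is the signed translation with sign (-1)^(z+w). *)
Definition phi (x y : 'Z_p) (z w : bool) : isotopism Q :=
  ((strans (z (+) w) x z,
    affp z (fun t => y + (w%:R - z%:R) * t%:R) w),
   affp z (fun t => (-1) ^+ (t (+) w) * x + y + (w && (t (+) z))%:R) (z (+) w)).

Lemma phi_in_regular_group x y z w : phi x y z w \in regular_group.
Proof.
rewrite inE; apply/andP; split; last by rewrite inE; apply/strans_setP; exists (z (+) w), x, z.
apply/autotopismP => [[x1 z1] [y1 w1]]; rewrite /phi /= !affpE /affine /Cp /=.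
congr (_, _); last by case: z w z1 w1 => [] [] [] [].
by case: z; case: w; case: z1; case: w1; rewrite /= ?expr0 ?expr1; ring.
Qed.

Lemma phi_base x y z w : iso_act (phi x y z w) base = ((x, z), (y, w), Cp (x, z) (y, w)).
Proof.
have /autotopismP phi_op : phi x y z w \in autotopisms (@Cp p).
  by have := phi_in_regular_group x y z w; rewrite inE => /andP[].
have phi1 : (phi x y z w).1.1 unit_Cp = (x, z).
  by rewrite /= affpE /affine /= mulr0 add0r mul1r.
have phi2 : (phi x y z w).1.2 unit_Cp = (y, w).
  by rewrite /= affpE /affine /= !mulr0 add0r addr0.
by rewrite /iso_act /base -phi1 -phi2 -phi_op Cp_unitr.
Qed.

Lemma regular_group_orbit t :
  t \in op_graph (@Cp p) -> exists2 h, h \in regular_group & iso_act h base = t.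
Proof.
case: t => [[[x z] [y w]] c]; rewrite inE /= => /eqP ->.
by exists (phi x y z w); [exact: phi_in_regular_group | exact: phi_base].
Qed.

(* A signed translation that is an automorphism of C_p fixing the identity
   is trivial: it fixes 0_0, so it is x_z |-> ((-1)^e x)_z, and comparing
   both sides of s (1_1 * 1_1) = s 1_1 * s 1_1, where 1_1 * 1_1 = 1_0,
   forces (-1)^e = 1. *)
Lemma strans_automorphism_id s :
  s \in strans_set -> s unit_Cp = unit_Cp ->
  (forall u v, s (Cp u v) = Cp (s u) (s v)) -> s = 1%g.
Proof.
case/strans_setP => e [a [al ->]] {s}; rewrite affpE /affine /= mulr0 add0r mul1r.
case=> a0 al0 s_op; subst a al.
have sE x z : strans e 0 false (x, z) = ((-1) ^+ e * x, z).
  by rewrite affpE /affine /= mulr0 addr0 addbF.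
have sign_e : (-1) ^+ e = 1 :> 'Z_p.
  have := s_op (1, true) (1, true); rewrite !sE /Cp /=.
  by move/(congr1 fst); rewrite /= mulr1 addNr add0r mulr1 addNr add0r.
by apply/permP => [[x z]]; rewrite perm1 sE sign_e mul1r.
Qed.

(* Freeness: an element of the regular group fixing the base point is an
   automorphism (by [autotopism_unit_fixed]) whose components all equal a
   signed translation, hence trivial. *)
Lemma regular_group_free h : h \in regular_group -> iso_act h base = base -> h = 1%g.
Proof.
case: h => [[s1 s2] s3]; rewrite inE => /andP[Haut]; rewrite inE /= => Hs1.
rewrite /iso_act /base /= => [[s1e s2e _]].
have [s31 s32] := autotopism_unit_fixed Cp_unitl Cp_unitr Haut s1e s2e; rewrite /= in s31 s32.
have /autotopismP /= s_op := Haut.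
have s1_id : s1 = 1%g.
  by apply: strans_automorphism_id => // u v; rewrite -s31 s_op -s32 s31.
have s2_id : s2 = 1%g by apply/permP => q; rewrite -s32 s31 s1_id.
have s3_id : s3 = 1%g by apply/permP => q; rewrite s31 s1_id.
by rewrite s1_id s2_id s3_id.
Qed.

End LoopCp.

Theorem corollary1 (p : nat) (hp : (2 <= p)%N) : topolinear (op_graph (@Cp p)).
Proof.
apply: (@regular_topolinear _ _ (regular_group p) (base p)).
- by apply: subset_trans (autotopisms_stab (@Cp p)); exact: subsetIl.
- exact: base_in_graph.
- exact: regular_group_orbit.
- exact: regular_group_free.
Qed.
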